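(* Let $\mathcal{W}$ be a $d_2$-dimensional subspace of $\mathbb{R}^n$ and $\mathcal{S}$ a $d_1$-dimensional subspace of $\mathbb{R}^n$ with $d_1 \le d_2$. Let $\mathbf{W} \in \mathbb{R}^{n\times d_2}$ and $\mathbf{S} \in \mathbb{R}^{n\times d_1}$ be matrices whose columns are orthonormal bases of $\mathcal{W}$ and $\mathcal{S}$, and let $\mathbf{W}^\top \mathbf{S} = \mathbf{U}\mathbf{\Sigma}\mathbf{V}^\top$ be a (thin) singular value decomposition with $\mathbf{U} \in \mathbb{R}^{d_2\times d_1}$ having orthonormal columns, $\mathbf{\Sigma} \in \mathbb{R}^{d_1\times d_1}$ diagonal with nonnegative entries, and $\mathbf{V} \in \mathbb{R}^{d_1\times d_1}$ orthogonal. Then the $d_1$-dimensional subspace $\mathcal{S}' = \mathrm{span}(\mathbf{W}\mathbf{U})$, which is contained in $\mathcal{W}$, is a subspace projection of $\mathcal{S}$ onto $\mathcal{W}$, i.e. $$\mathcal{S}' \in \underset{\mathcal{S}'' \subseteq \mathcal{W},\ \dim \mathcal{S}'' = d_1}{\operatorname{argmin}}\ \rho(\mathcal{S}, \mathcal{S}''),$$ where $\rho$ denotes the geodesic distance on the Grassmann manifold $\mathsf{Gr}(d_1, n)$.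
   Context: The Grassmann manifold $\mathsf{Gr}(d,n)$ is the set of $d$-dimensional linear subspaces of $\mathbb{R}^n$. The geodesic distance between two $d$-dimensional subspaces $\mathcal{A}, \mathcal{B}$ is $\rho(\mathcal{A},\mathcal{B}) = \big(\sum_{i=1}^{d} \theta_i^2\big)^{1/2}$, where $\theta_1,\dots,\theta_d \in [0,\pi/2]$ are the canonical angles between $\mathcal{A}$ and $\mathcal{B}$ (the arccosines of the singular values of $\mathbf{A}^\top\mathbf{B}$ for orthonormal basis matrices $\mathbf{A},\mathbf{B}$). The subspace projection $\omega(\mathcal{S})$ of a $d_1$-dimensional subspace $\mathcal{S}$ onto a $d_2$-dimensional subspace $\mathcal{W}$ ($d_2 \ge d_1$) is defined as a $d_1$-dimensional subspace $\mathcal{S}' \subseteq \mathcal{W}$ minimizing $\rho(\mathcal{S}, \mathcal{S}')$. *)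

From HB Require Import structures.
From mathcomp Require Import all_boot all_order all_algebra.
From mathcomp Require Import all_classical all_reals all_analysis.
Set Implicit Arguments. Unset Strict Implicit. Unset Printing Implicit Defensive.
Import Order.TTheory GRing.Theory Num.Theory.
Local Open Scope ring_scope.

(* Vectors of R^n are row vectors 'rV_n; a linear subspace of R^n is the row
   space (mxalgebra, %MS) of a matrix X : 'M_(m, n).  A "basis matrix" as in
   the paper is an n x d matrix A with orthonormal COLUMNS; the subspace it
   spans is the row space of A^T. *)

Definition orthonormal_cols (R : realType) (n d : nat) (A : 'M[R]_(n, d)) : Prop :=
  A^T *m A = 1%:M.

Definition onbasis_of (R : realType) (n d m : nat) (A : 'M[R]_(n, d))
    (X : 'M[R]_(m, n)) : Prop :=
  orthonormal_cols A /\ (A^T == X)%MS.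

Definition singular_values_of (R : realType) (d : nat) (M : 'M[R]_d)
    (s : 'rV[R]_d) : Prop :=
  (forall i, 0 <= s 0 i) /\
  exists U V : 'M[R]_d, orthonormal_cols U /\ orthonormal_cols V /\
    M = U *m diag_mx s *m V^T.

Definition geodesic_dist (R : realType) (n d m1 m2 : nat)
    (X : 'M[R]_(m1, n)) (Y : 'M[R]_(m2, n)) (r : R) : Prop :=
  \rank X = d /\ \rank Y = d /\
  exists (A B : 'M[R]_(n, d)) (s : 'rV[R]_d),
    onbasis_of A X /\ onbasis_of B Y /\ singular_values_of (A^T *m B) s /\
    r = Num.sqrt (\sum_(i < d) (acos (s 0 i)) ^+ 2).

(* Xp is a subspace projection of the d1-dimensional subspace Ssp onto Wsp:
   Xp is a d1-dimensional subspace of Wsp minimizing rho(Ssp, .) among all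
   d1-dimensional subspaces of Wsp (every subspace of R^n is the row space
   of some n x n matrix). *)
Definition subspace_projection (R : realType) (n d1 m1 m2 m3 : nat)
    (Ssp : 'M[R]_(m1, n)) (Wsp : 'M[R]_(m2, n)) (Xp : 'M[R]_(m3, n)) : Prop :=
  (Xp <= Wsp)%MS /\ \rank Xp = d1 /\
  exists r : R, geodesic_dist d1 Ssp Xp r /\
    forall Y : 'M[R]_n, (Y <= Wsp)%MS -> \rank Y = d1 ->
      forall r' : R, geodesic_dist d1 Ssp Y r' -> r <= r'.

From HB Require Import structures.
From mathcomp Require Import all_boot all_order all_algebra.
From mathcomp Require Import all_classical all_reals all_analysis.
From mathcomp Require Import lra zify.
Import Order.TTheory GRing.Theory Num.Theory.
Set Implicit Arguments. Unset Strict Implicit. Unset Printing Implicit Defensive.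
Local Open Scope ring_scope.

(* Let A, B be orthonormal bases of S and of a competitor Y <= W, and let s be
   the cosines of the principal angles between S and Y, i.e. the singular values
   of N = B^T A.  Through W^T S = U diag(Sig) V^T, N factors as
   (B^T W U) diag(Sig) (V^T S^T A), a contraction times diag(Sig) times a
   co-isometry.  A dimension count then shows that for every t >= 0 at most as
   many s_i as Sig_i exceed t; since acos^2 is decreasing on [0, 1], this
   forces sum acos(Sig_i)^2 <= sum acos(s_i)^2.  The left-hand side is exactly
   the squared distance to span(W U), whose principal cosines are Sig. *)

Section SquaredNorm.
Variable R : realFieldType.

Definition sqnorm k (v : 'rV[R]_k) : R := \sum_i v 0 i ^+ 2.

Definition contraction p q (M : 'M[R]_(p, q)) : Prop :=
  forall v : 'rV_p, sqnorm (v *m M) <= sqnorm v.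

Lemma sqnormE k (v : 'rV[R]_k) : sqnorm v = (v *m v^T) 0 0.
Proof. by rewrite !mxE; apply: eq_bigr => i _; rewrite mxE expr2. Qed.

Lemma sqnorm_ge0 k (v : 'rV[R]_k) : 0 <= sqnorm v.
Proof. by apply: sumr_ge0 => i _; rewrite sqr_ge0. Qed.

Lemma sqnormZ k a (v : 'rV[R]_k) : sqnorm (a *: v) = a ^+ 2 * sqnorm v.
Proof. by rewrite /sqnorm mulr_sumr; apply: eq_bigr => i _; rewrite mxE exprMn. Qed.

Lemma sqnorm_delta k (i : 'I_k) : sqnorm ('e_i : 'rV[R]_k) = 1.
Proof.
rewrite /sqnorm (bigD1 i) //= big1 => [|j ji]; first by rewrite mxE !eqxx expr1n addr0.
by rewrite mxE (negbTE ji) andbF expr0n.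
Qed.

Lemma sqnorm_mul_diag k (y s : 'rV[R]_k) :
  sqnorm (y *m diag_mx s) = \sum_i (y 0 i * s 0 i) ^+ 2.
Proof. by apply: eq_bigr => i _; rewrite mul_mx_diag mxE. Qed.

Lemma sqnorm_coisometry p q (C : 'M[R]_(p, q)) (v : 'rV_p) :
  C *m C^T = 1%:M -> sqnorm (v *m C) = sqnorm v.
Proof. by move=> CCt; rewrite !sqnormE trmx_mul mulmxA -(mulmxA v) CCt mulmx1. Qed.

Lemma contraction_coisometry p q (C : 'M[R]_(p, q)) :
  C *m C^T = 1%:M -> contraction C.
Proof. by move=> CCt v; rewrite sqnorm_coisometry. Qed.

Lemma contraction_isometry p q (C : 'M[R]_(p, q)) :
  C^T *m C = 1%:M -> contraction C.
Proof.
move=> CtC v; have := sqnorm_ge0 (v - v *m C *m C^T).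
suff -> : sqnorm (v - v *m C *m C^T) = sqnorm v - sqnorm (v *m C) by rewrite subr_ge0.
rewrite !sqnormE !linearB /= !trmx_mul !trmxK !mulmxBl !mulmxA.
by rewrite -(mulmxA (v *m C) C^T C) CtC mulmx1 !mxE; lra.
Qed.

Lemma coisometryM p q r (C1 : 'M[R]_(p, q)) (C2 : 'M[R]_(q, r)) :
  C1 *m C1^T = 1%:M -> C2 *m C2^T = 1%:M -> (C1 *m C2) *m (C1 *m C2)^T = 1%:M.
Proof. by move=> C1o C2o; rewrite trmx_mul mulmxA -(mulmxA C1) C2o mulmx1. Qed.

Lemma contractionM p q r (A : 'M[R]_(p, q)) (B : 'M[R]_(q, r)) :
  contraction A -> contraction B -> contraction (A *m B).
Proof. by move=> cA cB v; rewrite mulmxA; apply: le_trans (cB _) (cA _). Qed.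

Lemma contraction_trmx_mul n p q (A : 'M[R]_(n, p)) (B : 'M[R]_(n, q)) :
  A^T *m A = 1%:M -> B^T *m B = 1%:M -> contraction (A^T *m B).
Proof.
move=> AtA BtB; apply: contractionM; last exact: contraction_isometry.
by apply: contraction_coisometry; rewrite trmxK.
Qed.

Lemma singular_value_le1 p k (M U : 'M[R]_(p, k)) (V : 'M[R]_k) (s : 'rV_k) i :
  contraction M -> U^T *m U = 1%:M -> V^T *m V = 1%:M ->
  M = U *m diag_mx s *m V^T -> 0 <= s 0 i -> s 0 i <= 1.
Proof.
move=> cM UtU VtV defM s_ge0.
have : sqnorm ('e_i *m U^T *m M) <= 1.
  by apply: le_trans (cM _) _; rewrite sqnorm_coisometry ?trmxK ?sqnorm_delta.
rewrite defM !mulmxA -(mulmxA _ U^T U) UtU mulmx1 sqnorm_coisometry ?trmxK //.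
rewrite -rowE row_diag_mx sqnormZ sqnorm_delta mulr1 => s2_le1; nra.
Qed.

End SquaredNorm.

Section OrthonormalFrames.
Variable R : fieldType.

Lemma orthoproj_id m n q (C : 'M[R]_(n, q)) (X : 'M[R]_(m, n)) :
  C^T *m C = 1%:M -> (X <= C^T)%MS -> X *m C *m C^T = X.
Proof. by move=> CtC /submxP [Z ->]; rewrite -!mulmxA (mulmxA C^T) CtC mul1mx. Qed.

Lemma rank_orthonormal_cols n q (C : 'M[R]_(n, q)) :
  C^T *m C = 1%:M -> \rank C^T = q.
Proof.
move=> CtC; apply/eqP; rewrite eqn_leq rank_leq_row /=.
by rewrite -{1}(mxrank1 R q) -CtC mxrankM_maxl.
Qed.

End OrthonormalFrames.

Section Interlacing.
Variable R : realFieldType.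

Definition coord_proj k (P : pred 'I_k) : 'M[R]_k := diag_mx (\row_i (P i)%:R).

Lemma mulmx_coord_proj_eq0 k (P : pred 'I_k) (y : 'rV[R]_k) i :
  y *m coord_proj P = 0 -> P i -> y 0 i = 0.
Proof. by move=> /rowP /(_ i); rewrite mul_mx_diag !mxE => + Pi; rewrite Pi mulr1. Qed.

Lemma rank_coord_proj k (P : pred 'I_k) : (\rank (coord_proj P) <= #|P|)%N.
Proof.
have -> : coord_proj P = \sum_(i in P) delta_mx i i.
  rewrite /coord_proj diag_mx_sum_delta [RHS]big_mkcond; apply: eq_bigr => i _.
  by rewrite mxE unfold_in; case: (P i); rewrite ?scale1r ?scale0r.
rewrite -sum1_card; elim/big_ind2: _ => [|A a B b rA rB|i _].
- by rewrite mxrank0.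
- by apply: leq_trans (mxrank_add _ _) (leq_add rA rB).
- by rewrite mxrank_delta.
Qed.

Lemma rank_row_mx_le m n1 n2 (X : 'M[R]_(m, n1)) (Y : 'M[R]_(m, n2)) :
  (\rank (row_mx X Y) <= \rank X + \rank Y)%N.
Proof.
have -> : row_mx X Y = row_mx X 0 + row_mx 0 Y by rewrite add_row_mx addr0 add0r.
by apply: leq_trans (mxrank_add _ _) _; rewrite rank_row_mx0 rank_row_0mx.
Qed.

Lemma exists_supported_kernel k (E : 'M[R]_k) (K L : pred 'I_k) :
  (#|L| < #|K|)%N ->
  exists y : 'rV_k, [/\ y != 0, forall i, ~~ K i -> y 0 i = 0
                             & forall j, L j -> (y *m E) 0 j = 0].
Proof.
move=> ltLK; set M := row_mx (coord_proj [predC K]) (E *m coord_proj L).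
have rankM : (\rank M < k)%N.
  apply: leq_ltn_trans (rank_row_mx_le _ _) _.
  have rankEL := leq_trans (mxrankM_maxr E _) (rank_coord_proj L).
  apply: leq_ltn_trans (leq_add (rank_coord_proj _) rankEL) _.
  have := cardC K; rewrite card_ord => cardK.
  by rewrite -[X in (_ < X)%N]cardK addnC ltn_add2r.
have /rowV0Pn [y] : kermx M != 0 by rewrite -mxrank_eq0 mxrank_ker; lia.
rewrite sub_kermx mul_mx_row row_mx_eq0 mulmxA => /andP [/eqP yK /eqP yEL] y0.
exists y; split => // [i|j] ?; first exact: mulmx_coord_proj_eq0 yK _.
exact: mulmx_coord_proj_eq0 yEL _.
Qed.

Lemma sqnorm_mul_diag_gt k (y s : 'rV[R]_k) t :
  0 <= t -> y != 0 -> (forall i, ~~ (t < s 0 i) -> y 0 i = 0) ->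
  t ^+ 2 * sqnorm y < sqnorm (y *m diag_mx s).
Proof.
move=> t_ge0 y0 ys.
have [i0 yi0] : exists i, y 0 i != 0.
  apply/existsP; apply: contraR y0 => /existsPn y0.
  by apply/eqP/rowP => i; rewrite mxE; apply/eqP/negPn.
have ti0 : t < s 0 i0 by apply: contraNT yi0 => /ys ->.
rewrite sqnorm_mul_diag /sqnorm mulr_sumr (bigD1 i0) //= [ltRHS](bigD1 i0) //=.
apply: ltr_leD.
  by rewrite exprMn mulrC ltr_pM2l ?lt_def ?sqrf_eq0 ?yi0 ?sqr_ge0 //; nra.
apply: ler_sum => i _; have [ti|/ys ->] := boolP (t < s 0 i).
  by rewrite exprMn mulrC ler_wpM2l ?sqr_ge0 //; nra.
by rewrite !mul0r expr0n mulr0.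
Qed.

Lemma sqnorm_mul_diag_le k (z s : 'rV[R]_k) t :
  0 <= t -> (forall i, 0 <= s 0 i) -> (forall i, t < s 0 i -> z 0 i = 0) ->
  sqnorm (z *m diag_mx s) <= t ^+ 2 * sqnorm z.
Proof.
move=> t_ge0 s_ge0 zs; rewrite sqnorm_mul_diag /sqnorm mulr_sumr; apply: ler_sum => i _.
have [/zs ->|si] := boolP (t < s 0 i); first by rewrite !mul0r expr0n mulr0.
rewrite -leNgt in si.
by rewrite exprMn mulrC ler_wpM2r ?sqr_ge0 // ler_sqr ?nnegrE ?s_ge0.
Qed.

(* If more s_i than sig_i exceed t, a dimension count yields y != 0 supported
   where s > t whose image z = y Q^T D vanishes where sig > t; then
   t^2 |y|^2 < |y diag s|^2 = |y Q^T N|^2 = |z diag sig|^2 <= t^2 |z|^2 <= t^2 |y|^2. *)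
Lemma card_singular_values_gt_le d (N Q P D G : 'M[R]_d) (s sig : 'rV_d) t :
  Q^T *m Q = 1%:M -> P^T *m P = 1%:M -> N = Q *m diag_mx s *m P^T ->
  contraction D -> G *m G^T = 1%:M -> N = D *m diag_mx sig *m G ->
  (forall i, 0 <= sig 0 i) -> 0 <= t ->
  (#|[pred i | t < s 0 i]%R| <= #|[pred i | t < sig 0 i]%R|)%N.
Proof.
move=> QtQ PtP defN cD GGt defN' sig_ge0 t_ge0; rewrite leqNgt; apply/negP.
case/(exists_supported_kernel (Q^T *m D)) => y [y0 ys yz].
set z := y *m (Q^T *m D).
have normN : sqnorm (y *m diag_mx s) = sqnorm (z *m diag_mx sig).
  transitivity (sqnorm (y *m Q^T *m N)).
    by rewrite defN !mulmxA -(mulmxA y) QtQ mulmx1 [RHS]sqnorm_coisometry ?trmxK.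
  by rewrite defN' /z !mulmxA sqnorm_coisometry.
have zy : sqnorm z <= sqnorm y.
  by rewrite /z mulmxA; apply: le_trans (cD _) _; rewrite sqnorm_coisometry ?trmxK.
have := sqnorm_mul_diag_gt t_ge0 y0 ys.
have := sqnorm_mul_diag_le t_ge0 sig_ge0 yz.
have := sqnorm_ge0 z; rewrite normN; nra.
Qed.

End Interlacing.

Section CountDomination.
Variable R : realDomainType.

Lemma sorted_sum_antitone_le (f : R -> R) (a b : seq R) :
  sorted >=%R a -> sorted >=%R b -> size a = size b ->
  {subset a <= `[0, 1]} -> {subset b <= `[0, 1]} ->
  {in `[0, 1] &, {homo f : x y /~ x <= y}} ->
  (forall t, 0 <= t -> (count (> t) a <= count (> t) b)%N) ->
  \sum_(y <- b) f y <= \sum_(x <- a) f x.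
Proof.
elim: a b => [|x a IH] [|y b] //=.
rewrite !path_sortedE; try exact: ge_trans.
move=> /andP [xa sa] /andP [yb sb] [size_ab] ab01 bb01 f_anti cnt.
have x01 := ab01 x (mem_head x a); have y01 := bb01 y (mem_head y b).
have count_gt0 u t (s : seq R) : all (>=%R u) s -> u <= t -> count (> t) s = 0%N.
  move=> su ut; apply/eqP; rewrite -leqn0 leqNgt -has_count.
  by apply/hasPn => z /(allP su) zu; rewrite -leNgt (le_trans zu ut).
have xy : x <= y.
  have y_ge0 : 0 <= y by move: y01; rewrite in_itv => /andP [].
  rewrite leNgt; apply/negP => yx; have := cnt y y_ge0.
  by rewrite /= yx ltxx (count_gt0 y y b).
rewrite !big_cons; apply: lerD; first exact: f_anti.
apply: IH => //.
- by move=> z za; apply: ab01; rewrite inE za orbT.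
- by move=> z zb; apply: bb01; rewrite inE zb orbT.
move=> t t_ge0; have := cnt t t_ge0; rewrite /=.
have [tx|xt] := ltP t x; first by rewrite (lt_le_trans tx xy) leq_add2l.
by rewrite (count_gt0 x).
Qed.

Lemma sum_antitone_le_card k (f : R -> R) (a b : 'I_k -> R) :
  (forall i, a i \in `[0, 1]) -> (forall i, b i \in `[0, 1]) ->
  {in `[0, 1] &, {homo f : x y /~ x <= y}} ->
  (forall t, 0 <= t -> (#|[pred i | t < a i]%R| <= #|[pred i | t < b i]%R|)%N) ->
  \sum_i f (b i) <= \sum_i f (a i).
Proof.
move=> a01 b01 f_anti cnt.
have ge_total : total (>=%R : rel R) by move=> x y; exact: le_total.
pose srt (c : 'I_k -> R) := sort >=%R (map c (enum 'I_k)).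
have srt_perm c : perm_eq (srt c) (map c (enum 'I_k)) by exact/permEl/perm_sort.
have sumE c : \sum_i f (c i) = \sum_(x <- srt c) f x.
  by rewrite (perm_big _ (srt_perm c)) big_map enumT.
have card_count c t : #|[pred i | t < c i]%R| = count (> t) (srt c).
  by rewrite (permP (srt_perm c)) count_map -size_filter enumT -cardE.
rewrite !sumE; apply: sorted_sum_antitone_le => //.
- exact: sort_sorted.
- exact: sort_sorted.
- by rewrite !size_sort !size_map.
- by move=> x; rewrite mem_sort => /mapP [i _ ->].
- by move=> x; rewrite mem_sort => /mapP [i _ ->].
- by move=> t t_ge0; rewrite -!card_count; exact: cnt.
Qed.

End CountDomination.

Lemma acos_antitone (R : realType) : {in `[-1, 1] &, {homo @acos R : x y /~ x <= y}}.
Proof.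
move=> x y x11 y11 xy; rewrite leNgt; apply/negP => acos_lt.
have acos_in (z : R) : z \in `[-1, 1] -> acos z \in `[0, pi].
  by rewrite !in_itv /= => z11; rewrite acos_ge0 ?acos_lepi.
move: acos_lt; rewrite -(ltr_cos (acos_in y y11) (acos_in x x11)) !acosK //.
by rewrite ltNge xy.
Qed.

Lemma acos_sqr_antitone (R : realType) :
  {in `[0, 1] &, {homo (fun x : R => acos x ^+ 2) : x y /~ x <= y}}.
Proof.
have sub01 z : z \in `[0, 1] -> z \in `[-1, 1 :> R].
  by rewrite !in_itv /= => /andP [z0 ->]; rewrite andbT (le_trans _ z0) ?lerN10.
move=> x y /sub01 x11 /sub01 y11 xy.
rewrite lerXn2r ?nnegrE ?acos_antitone //; move: x11 y11; rewrite !in_itv /=.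
all: by move=> /acos_ge0 ? /acos_ge0.
Qed.

Definition angle_dist (R : realType) d (s : 'rV[R]_d) : R :=
  Num.sqrt (\sum_i acos (s 0 i) ^+ 2).

Section SubspaceProjection.
Variables (R : realType) (n d1 d2 : nat).
Variables (W : 'M[R]_(n, d2)) (S : 'M[R]_(n, d1)) (U : 'M[R]_(d2, d1)).
Variables (Sig : 'rV[R]_d1) (V : 'M[R]_d1).
Hypotheses (WtW : W^T *m W = 1%:M) (StS : S^T *m S = 1%:M).
Hypotheses (UtU : U^T *m U = 1%:M) (VtV : V^T *m V = 1%:M).
Hypotheses (Sig_ge0 : forall i, 0 <= Sig 0 i) (svd : W^T *m S = U *m diag_mx Sig *m V^T).

Lemma Sig_in01 i : Sig 0 i \in `[0, 1].
Proof.
rewrite in_itv /= Sig_ge0.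
exact: singular_value_le1 (contraction_trmx_mul WtW StS) UtU VtV svd (Sig_ge0 i).
Qed.

Lemma WU_orthonormal : (W *m U)^T *m (W *m U) = 1%:M.
Proof. by rewrite trmx_mul -mulmxA (mulmxA W^T) WtW mul1mx. Qed.

Lemma geodesic_dist_WU : geodesic_dist d1 S^T (W *m U)^T (angle_dist Sig).
Proof.
have WUo := WU_orthonormal.
do 2 (split; first exact: rank_orthonormal_cols).
exists S, (W *m U), Sig; do 2 (split; first by split; rewrite // submx_refl).
do 2 split => //; exists V, 1%:M.
do 2 (split; first by rewrite /orthonormal_cols ?trmx1 ?mulmx1).
have -> : S^T *m (W *m U) = (W^T *m S)^T *m U by rewrite trmx_mul trmxK mulmxA.
by rewrite svd !trmx_mul trmxK tr_diag_mx -!mulmxA UtU trmx1 !mulmx1.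
Qed.

Lemma factor_through_W (A B : 'M[R]_(n, d1)) :
  (A^T <= S^T)%MS -> (B^T <= W^T)%MS ->
  B^T *m A = (B^T *m W *m U) *m diag_mx Sig *m (V^T *m S^T *m A).
Proof.
move=> AS BW; have SSA : S *m S^T *m A = A.
  by rewrite -[RHS]trmxK -(orthoproj_id StS AS) !trmx_mul !trmxK mulmxA.
rewrite -{1}(orthoproj_id WtW BW) -{1}SSA !mulmxA -(mulmxA (B^T *m W) W^T S) svd.
by rewrite !mulmxA.
Qed.

Lemma geodesic_dist_WU_min (Y : 'M[R]_n) (r : R) :
  (Y <= W^T)%MS -> geodesic_dist d1 S^T Y r -> angle_dist Sig <= r.
Proof.
move=> YW [_ [_ [A [B [s [[AtA /andP [AS SA]] [[BtB /andP [BY _]] []]]]]]]].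
move=> [s_ge0 [P [Q [PtP [QtQ AtB]]]]] ->.
have BW := submx_trans BY YW.
rewrite /angle_dist ler_sqrt ?sumr_ge0 // => [|i _]; last exact: sqr_ge0.
apply: sum_antitone_le_card (@acos_sqr_antitone R) _ => [i|i|t t_ge0].
- have cAB := contraction_trmx_mul AtA BtB.
  by rewrite in_itv /= s_ge0 (singular_value_le1 cAB PtP QtQ AtB).
- exact: Sig_in01.
apply: (card_singular_values_gt_le (N := B^T *m A)) QtQ PtP _ _ _
  (factor_through_W AS BW) Sig_ge0 t_ge0.
- by rewrite -[B^T *m A]trmxK trmx_mul trmxK AtB !trmx_mul trmxK tr_diag_mx mulmxA.
- apply: contractionM (contraction_isometry UtU); apply: contraction_coisometry.
  by rewrite trmx_mul trmxK mulmxA (orthoproj_id WtW BW).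
- rewrite -mulmxA; apply: coisometryM; first by rewrite trmxK.
  by rewrite trmx_mul trmxK mulmxA (orthoproj_id AtA SA).
Qed.

End SubspaceProjection.

Theorem lemma3 (R : realType) (n d1 d2 : nat)
    (W : 'M[R]_(n, d2)) (S : 'M[R]_(n, d1))
    (U : 'M[R]_(d2, d1)) (Sig : 'rV[R]_d1) (V : 'M[R]_d1) :
  (d1 <= d2)%N ->
  orthonormal_cols W -> orthonormal_cols S ->
  orthonormal_cols U -> orthonormal_cols V ->
  (forall i, 0 <= Sig 0 i) ->
  W^T *m S = U *m diag_mx Sig *m V^T ->
  subspace_projection d1 (S^T) (W^T) ((W *m U)^T).
Proof.
move=> _ WtW StS UtU VtV Sig_ge0 svd.
split; first by rewrite trmx_mul submxMl.
split; first exact: rank_orthonormal_cols (WU_orthonormal WtW UtU).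
exists (angle_dist Sig); split.
  exact: geodesic_dist_WU WtW StS UtU VtV Sig_ge0 svd.
by move=> Y YW _ r /(geodesic_dist_WU_min WtW StS UtU VtV Sig_ge0 svd YW).
Qed.
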